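(* Let $R$ be an $\omega$-algebraic lattice, and let $D,C$ be the inverse limits of $C_0=\{\bot\}$, $D_n=[C_n\to R]$, $C_{n+1}=D_n\times C_n$, so that $D\cong[C\to R]$ and $C\cong D\times C$. For each $A\in\{R,D,C\}$, the poset $(\mathcal F_A,\subseteq)$ of filters over $(\Lambda_A,\le_A)$ is isomorphic to $A$.
   Context: Domains. An $\omega$-algebraic lattice is a complete lattice in which every element is the join of the compact elements below it, and which has countably many compact elements. $\mathcal K(R)$ denotes the compact elements of $R$, $\bot$ is the bottom and $\sqcup$ is the join. Type languages: - $\Lambda_R$: $\rho::=\psi_a\mid\omega\mid\rho\wedge\rho$, with one constant $\psi_a$ for each $a\in\mathcal K(R)$. - $\Lambda_D$: $\delta::=\rho\mid\kappa\to\rho\mid\omega\mid\delta\wedge\delta$, with $\rho\in\Lambda_R$. - $\Lambda_C$: $\kappa::=\delta\times\kappa\mid\omega\mid\kappa\wedge\kappa$. An intersection type theory on such a language is a reflexive, transitive relation $\le$ satisfying $\sigma\wedge\tau\le\sigma$, $\sigma\wedge\tau\le\tau$, $\sigma\le\omega$, and, if $\rho\le\sigma$ and $\rho\le\tau$, then $\rho\le\sigma\wedge\tau$. We write $\sigma\sim\tau$ when $\sigma\le\tau\le\sigma$. The relations are defined as follows: - $\le_R$ is the least intersection type theory on $\Lambda_R$ with $\psi_\bot\sim_R\omega$ and $\psi_{a\sqcup b}\sim_R\psi_a\wedge\psi_b$. - $\le_D$ and $\le_C$ are the least intersection type theories on $\Lambda_D$ and $\Lambda_C$ closed under the following: - if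 $\rho_1\le_R\rho_2$ then $\rho_1\le_D\rho_2$; - $\omega\le_D\omega\to\omega$; - $\psi_a\le_D\omega\to\psi_a$ and $\omega\to\psi_a\le_D\psi_a$; - $\omega\le_C\omega\times\omega$; - $(\kappa\to\rho_1)\wedge(\kappa\to\rho_2)\le_D\kappa\to(\rho_1\wedge\rho_2)$; - $(\delta_1\times\kappa_1)\wedge(\delta_2\times\kappa_2)\le_C(\delta_1\wedge\delta_2)\times(\kappa_1\wedge\kappa_2)$; - if $\kappa_2\le_C\kappa_1$ and $\rho_1\le_R\rho_2$ then $\kappa_1\to\rho_1\le_D\kappa_2\to\rho_2$; - if $\delta_1\le_D\delta_2$ and $\kappa_1\le_C\kappa_2$ then $\delta_1\times\kappa_1\le_C\delta_2\times\kappa_2$. A filter over $(\Lambda_A,\le_A)$ is a set $f\subseteq\Lambda_A$ with $\omega\in f$, upward closed under $\le_A$, and closed under $\wedge$. $\mathcal F_A$ denotes the set of such filters. *)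

Definition is_ub {T : Type} (le : T -> T -> Prop) (S : T -> Prop) (x : T) : Prop :=
  forall y, S y -> le y x.

Definition is_lub {T : Type} (le : T -> T -> Prop) (S : T -> Prop) (x : T) : Prop :=
  is_ub le S x /\ forall z, is_ub le S z -> le x z.

(* least upper bound of S inside the subset W (the "carrier" of a sub-poset) *)
Definition is_lub_in {T : Type} (W : T -> Prop) (le : T -> T -> Prop)
    (S : T -> Prop) (x : T) : Prop :=
  W x /\ is_ub le S x /\ forall z, W z -> is_ub le S z -> le x z.

Definition directed {T : Type} (le : T -> T -> Prop) (S : T -> Prop) : Prop :=
  (exists x, S x) /\
  forall x y, S x -> S y -> exists z, S z /\ le x z /\ le y z.

Definition compact {T : Type} (le : T -> T -> Prop) (x : T) : Prop :=
  forall S : T -> Prop, directed le S ->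
  forall s, is_lub le S s -> le x s -> exists y, S y /\ le x y.

Definition omega_algebraic_lattice {T : Type} (le : T -> T -> Prop) : Prop :=
  (forall x, le x x) /\
  (forall x y z, le x y -> le y z -> le x z) /\
  (forall x y, le x y -> le y x -> x = y) /\
  (forall S : T -> Prop, exists x, is_lub le S x) /\
  (forall x, is_lub le (fun a => compact le a /\ le a x) x) /\
  (exists f : nat -> T, forall a, compact le a -> exists n, f n = a).

Definition Kel {T : Type} (le : T -> T -> Prop) : Type := {a : T | compact le a}.

Inductive tyR (K : Type) : Type :=
| psiR : K -> tyR K
| omR : tyR K
| meetR : tyR K -> tyR K -> tyR K.

Inductive tyD (K : Type) : Type :=
| rD : tyR K -> tyD K
| arrD : tyC K -> tyR K -> tyD K
| omD : tyD K
| meetD : tyD K -> tyD K -> tyD K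
with tyC (K : Type) : Type :=
| prodC : tyD K -> tyC K -> tyC K
| omC : tyC K
| meetC : tyC K -> tyC K -> tyC K.

Arguments psiR {K} _.
Arguments omR {K}.
Arguments meetR {K} _ _.
Arguments rD {K} _.
Arguments arrD {K} _ _.
Arguments omD {K}.
Arguments meetD {K} _ _.
Arguments prodC {K} _ _.
Arguments omC {K}.
Arguments meetC {K} _ _.

Inductive leR {T : Type} (le : T -> T -> Prop) : tyR (Kel le) -> tyR (Kel le) -> Prop :=
| leR_refl : forall s, leR le s s
| leR_trans : forall s t u, leR le s t -> leR le t u -> leR le s u
| leR_meet_l : forall s t, leR le (meetR s t) s
| leR_meet_r : forall s t, leR le (meetR s t) t
| leR_top : forall s, leR le s omR
| leR_glb : forall r s t, leR le r s -> leR le r t -> leR le r (meetR s t)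
| leR_bot1 : forall a : Kel le, is_lub le (fun _ => False) (proj1_sig a) ->
    leR le (psiR a) omR
| leR_bot2 : forall a : Kel le, is_lub le (fun _ => False) (proj1_sig a) ->
    leR le omR (psiR a)
| leR_join1 : forall a b c : Kel le,
    is_lub le (fun x => x = proj1_sig a \/ x = proj1_sig b) (proj1_sig c) ->
    leR le (psiR c) (meetR (psiR a) (psiR b))
| leR_join2 : forall a b c : Kel le,
    is_lub le (fun x => x = proj1_sig a \/ x = proj1_sig b) (proj1_sig c) ->
    leR le (meetR (psiR a) (psiR b)) (psiR c).

Inductive leD {T : Type} (le : T -> T -> Prop) : tyD (Kel le) -> tyD (Kel le) -> Prop :=
| leD_R : forall r1 r2, leR le r1 r2 -> leD le (rD r1) (rD r2)
| leD_refl : forall s, leD le s s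
| leD_trans : forall s t u, leD le s t -> leD le t u -> leD le s u
| leD_meet_l : forall s t, leD le (meetD s t) s
| leD_meet_r : forall s t, leD le (meetD s t) t
| leD_top : forall s, leD le s omD
| leD_glb : forall r s t, leD le r s -> leD le r t -> leD le r (meetD s t)
| leD_om_arr : leD le omD (arrD omC omR)
| leD_psi_arr : forall a, leD le (rD (psiR a)) (arrD omC (psiR a))
| leD_arr_psi : forall a, leD le (arrD omC (psiR a)) (rD (psiR a))
| leD_arr_meet : forall k r1 r2,
    leD le (meetD (arrD k r1) (arrD k r2)) (arrD k (meetR r1 r2))
| leD_arr : forall k1 k2 r1 r2, leC le k2 k1 -> leR le r1 r2 ->
    leD le (arrD k1 r1) (arrD k2 r2)
with leC {T : Type} (le : T -> T -> Prop) : tyC (Kel le) -> tyC (Kel le) -> Prop :=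
| leC_refl : forall s, leC le s s
| leC_trans : forall s t u, leC le s t -> leC le t u -> leC le s u
| leC_meet_l : forall s t, leC le (meetC s t) s
| leC_meet_r : forall s t, leC le (meetC s t) t
| leC_top : forall s, leC le s omC
| leC_glb : forall r s t, leC le r s -> leC le r t -> leC le r (meetC s t)
| leC_om_prod : leC le omC (prodC omD omC)
| leC_prod_meet : forall d1 d2 k1 k2,
    leC le (meetC (prodC d1 k1) (prodC d2 k2)) (prodC (meetD d1 d2) (meetC k1 k2))
| leC_prod : forall d1 d2 k1 k2, leD le d1 d2 -> leC le k1 k2 ->
    leC le (prodC d1 k1) (prodC d2 k2).

Definition is_filter {X : Type} (leX : X -> X -> Prop) (om : X) (meet : X -> X -> X)
    (f : X -> Prop) : Prop :=
  f om /\ (forall s t, f s -> leX s t -> f t) /\ (forall s t, f s -> f t -> f (meet s t)).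

Definition filterR {T : Type} (le : T -> T -> Prop) : Type :=
  {f : tyR (Kel le) -> Prop | is_filter (leR le) omR meetR f}.
Definition filterD {T : Type} (le : T -> T -> Prop) : Type :=
  {f : tyD (Kel le) -> Prop | is_filter (leD le) omD meetD f}.
Definition filterC {T : Type} (le : T -> T -> Prop) : Type :=
  {f : tyC (Kel le) -> Prop | is_filter (leC le) omC meetC f}.

Definition filter_incl {X : Type} {P : (X -> Prop) -> Prop} (f g : {h : X -> Prop | P h}) : Prop :=
  forall x, proj1_sig f x -> proj1_sig g x.

Fixpoint Craw (T : Type) (n : nat) : Type :=
  match n with
  | 0 => unit
  | S m => ((Craw T m -> T) * Craw T m)%type
  end.

Definition Draw (T : Type) (n : nat) : Type := Craw T n -> T.

Definition scott_cont {T X : Type} (le : T -> T -> Prop)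
    (leX : X -> X -> Prop) (W : X -> Prop) (f : X -> T) : Prop :=
  (forall x y, W x -> W y -> leX x y -> le (f x) (f y)) /\
  (forall S : X -> Prop, (forall x, S x -> W x) -> directed leX S ->
     forall x, is_lub_in W leX S x ->
     is_lub le (fun r => exists s, S s /\ r = f s) (f x)).

(* order and well-formedness (the genuine elements) of C_n:
   C_{n+1} = [C_n -> R] x C_n with componentwise order, [C_n -> R] being the
   Scott-continuous maps with the pointwise order *)
Fixpoint Cstr {T : Type} (le : T -> T -> Prop) (n : nat)
  : (Craw T n -> Craw T n -> Prop) * (Craw T n -> Prop) :=
  match n return ((Craw T n -> Craw T n -> Prop) * (Craw T n -> Prop)) with
  | 0 => (fun _ _ => True, fun _ => True)
  | S m =>
      let lem := fst (Cstr le m) in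
      let wfm := snd (Cstr le m) in
      (fun x y => (forall c, wfm c -> le (fst x c) (fst y c)) /\ lem (snd x) (snd y),
       fun x => scott_cont le lem wfm (fst x) /\ wfm (snd x))
  end.

Definition Cle {T : Type} (le : T -> T -> Prop) (n : nat) := fst (Cstr le n).
Definition Cwf {T : Type} (le : T -> T -> Prop) (n : nat) := snd (Cstr le n).

Definition Dwf {T : Type} (le : T -> T -> Prop) (n : nat) (f : Draw T n) : Prop :=
  scott_cont le (Cle le n) (Cwf le n) f.

Fixpoint ep {T : Type} (bot : T) (n : nat)
  : (Craw T n -> Craw T (S n)) * (Craw T (S n) -> Craw T n) :=
  match n return ((Craw T n -> Craw T (S n)) * (Craw T (S n) -> Craw T n)) with
  | 0 => (fun _ => ((fun _ => bot), tt), fun _ => tt)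
  | S m =>
      let e := fst (ep bot m) in
      let p := snd (ep bot m) in
      (fun x => ((fun c => fst x (p c)), e (snd x)),
       fun y => ((fun c => fst y (e c)), p (snd y)))
  end.

Definition emb {T : Type} (bot : T) (n : nat) := fst (ep bot n).
Definition prj {T : Type} (bot : T) (n : nat) := snd (ep bot n).

Definition Dlim {T : Type} (le : T -> T -> Prop) (bot : T) : Type :=
  {x : forall n, Draw T n |
    forall n, Dwf le n (x n) /\
      forall c, Cwf le n c -> x n c = x (S n) (emb bot n c)}.

Definition Dlim_le {T : Type} {le : T -> T -> Prop} {bot : T} (x y : Dlim le bot) : Prop :=
  forall n c, Cwf le n c -> le (proj1_sig x n c) (proj1_sig y n c).

(* C = inverse limit of the C_n along p_n (equality in C_n is the order kernel) *)
Definition Clim {T : Type} (le : T -> T -> Prop) (bot : T) : Type :=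
  {x : forall n, Craw T n |
    forall n, Cwf le n (x n) /\
      Cle le n (x n) (prj bot n (x (S n))) /\ Cle le n (prj bot n (x (S n))) (x n)}.

Definition Clim_le {T : Type} {le : T -> T -> Prop} {bot : T} (x y : Clim le bot) : Prop :=
  forall n, Cle le n (proj1_sig x n) (proj1_sig y n).

(* f is an order embedding whose image meets every equivalence class: for
   partial orders this is exactly an order isomorphism; for the limits above,
   whose raw representatives may carry junk off the genuine elements, it is an
   isomorphism of the underlying posets (quotient by the order kernel). *)
Definition order_iso {A B : Type} (leA : A -> A -> Prop) (leB : B -> B -> Prop) : Prop :=
  exists (f : A -> B) (g : B -> A),
    (forall x y, leA x y <-> leB (f x) (f y)) /\
    (forall y, leB (f (g y)) y /\ leB y (f (g y))).

From Stdlib Require Import Classical ClassicalEpsilon Lia PeanoNat FunctionalExtensionality.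

(* Every type denotes a compact element: [psi_a] denotes [a], an arrow [kappa -> rho]
   the step function with value [rho] above [kappa], and a type of Lambda_C of depth at
   most [n] a compact element of C_n.  An element [x] is sent to the filter of the types
   whose denotations lie below [x] at every level.  Soundness of the type theories for
   the denotations makes this a filter, and since every element is the directed join of
   the denotations below it, the map is an order embedding.  Conversely a filter [F] is
   the image of the join of the denotations of its members: by compactness, the
   denotation of a type below that join already lies below the denotation of a single
   member of [F], so by completeness of the theories the type follows from that member. *)

Lemma filter_order_iso {L X : Type} (leL : L -> L -> Prop) (om : L) (mt : L -> L -> L)
  (leX : X -> X -> Prop) (sat : X -> L -> Prop) :
  (forall x, is_filter leL om mt (sat x)) ->
  (forall x y, leX x y <-> (forall s, sat x s -> sat y s)) ->
  (forall F, is_filter leL om mt F -> exists x, forall s, sat x s <-> F s) ->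
  order_iso (@filter_incl _ _ : {f : L -> Prop | is_filter leL om mt f} -> _ -> Prop) leX.
Proof.
  intros Hfilter Hincl Hsurj.
  exists (fun F => proj1_sig (constructive_indefinite_description _ (Hsurj _ (proj2_sig F)))).
  exists (fun x => exist _ (sat x) (Hfilter x)).
  split.
  - intros [F HF] [G HG]; unfold filter_incl; cbn.
    destruct (constructive_indefinite_description _ _) as [x Hx].
    destruct (constructive_indefinite_description _ _) as [y Hy]; cbn.
    rewrite Hincl; split; intros H s Hs; apply Hy, H, Hx, Hs.
  - intros y; cbn.
    destruct (constructive_indefinite_description _ _) as [x Hx]; cbn.
    split; apply Hincl; intros s Hs; apply Hx; auto.
Qed.

Lemma directed_image {X Y : Type} (leX : X -> X -> Prop) (leY : Y -> Y -> Prop)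
  (W : X -> Prop) (f : X -> Y) (S : X -> Prop) :
  (forall x y, W x -> W y -> leX x y -> leY (f x) (f y)) ->
  (forall x, S x -> W x) -> directed leX S ->
  directed leY (fun y => exists s, S s /\ y = f s).
Proof.
  intros Hmono HW [[x0 Hx0] Hdir]; split.
  - exists (f x0); eauto.
  - intros a b [s1 [S1 ->]] [s2 [S2 ->]].
    destruct (Hdir s1 s2 S1 S2) as [z [Sz [H1 H2]]].
    exists (f z); split; [eauto | split; apply Hmono; auto].
Qed.

Lemma nat_ind_down (P : nat -> Prop) n :
  (forall m, n <= m -> P m) -> (forall m, P (S m) -> P m) -> forall m, P m.
Proof.
  intros Hup Hdown m.
  assert (Hgap : forall j m, m + j = n -> P m).
  { induction j as [|j IH]; intros m' Hm'; [apply Hup; lia | apply Hdown, IH; lia]. }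
  destruct (Nat.le_gt_cases n m); [apply Hup; auto | apply (Hgap (n - m)); lia].
Qed.

Section FilterModel.

Variables (T : Type) (le : T -> T -> Prop) (bot : T).
Hypotheses (HR : omega_algebraic_lattice le) (Hbot : forall x, le bot x).

Lemma le_refl x : le x x.
Proof. destruct HR as [H _]; apply H. Qed.

Lemma le_trans x y z : le x y -> le y z -> le x z.
Proof. destruct HR as [_ [H _]]; apply H. Qed.

Lemma le_antisym x y : le x y -> le y x -> x = y.
Proof. destruct HR as [_ [_ [H _]]]; apply H. Qed.

Lemma le_compact_approx x : is_lub le (fun a => compact le a /\ le a x) x.
Proof. destruct HR as [_ [_ [_ [_ [H _]]]]]; apply H. Qed.

Definition sup (S : T -> Prop) : T :=
  proj1_sig (constructive_indefinite_description _ (proj1 (proj2 (proj2 (proj2 HR))) S)).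

Lemma sup_lub S : is_lub le S (sup S).
Proof. unfold sup; destruct (constructive_indefinite_description _ _); auto. Qed.

Lemma sup_ub S x : S x -> le x (sup S).
Proof. intro; apply (sup_lub S); auto. Qed.

Lemma sup_least S z : (forall x, S x -> le x z) -> le (sup S) z.
Proof. intro; apply (sup_lub S); auto. Qed.

Lemma sup_mono (S S' : T -> Prop) :
  (forall x, S x -> exists y, S' y /\ le x y) -> le (sup S) (sup S').
Proof.
  intro H; apply sup_least; intros x Sx.
  destruct (H x Sx) as [y [S'y Hxy]].
  apply le_trans with y; [exact Hxy | apply sup_ub, S'y].
Qed.

Lemma sup_ext (S S' : T -> Prop) : (forall x, S x <-> S' x) -> sup S = sup S'.
Proof.
  intro H; apply le_antisym; apply sup_mono; intros x Hx;
    exists x; split; [apply H; exact Hx | apply le_refl | apply H; exact Hx | apply le_refl].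
Qed.

Definition join (a b : T) : T := sup (fun x => x = a \/ x = b).

Lemma join_lub a b : is_lub le (fun x => x = a \/ x = b) (join a b).
Proof. apply sup_lub. Qed.

Lemma join_l a b : le a (join a b).
Proof. apply sup_ub; auto. Qed.

Lemma join_r a b : le b (join a b).
Proof. apply sup_ub; auto. Qed.

Lemma join_least a b z : le a z -> le b z -> le (join a b) z.
Proof. intros; apply sup_least; intros x [-> | ->]; auto. Qed.

Lemma join_mono a b a' b' : le a a' -> le b b' -> le (join a b) (join a' b').
Proof.
  intros; apply join_least; eapply le_trans; eauto using join_l, join_r.
Qed.

Lemma compact_le_sup a S :
  compact le a -> directed le S -> le a (sup S) -> exists y, S y /\ le a y.
Proof. intros Ha Hdir; apply Ha; auto; apply sup_lub. Qed.

Lemma bot_compact : compact le bot.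
Proof. intros S [[y Sy] _] _ _ _; exists y; auto. Qed.

Lemma join_compact a b : compact le a -> compact le b -> compact le (join a b).
Proof.
  intros Ha Hb S Hdir s Hs Hle.
  destruct (Ha S Hdir s Hs) as [y1 [S1 H1]]; [eapply le_trans; [apply join_l | exact Hle] |].
  destruct (Hb S Hdir s Hs) as [y2 [S2 H2]]; [eapply le_trans; [apply join_r | exact Hle] |].
  destruct (proj2 Hdir y1 y2 S1 S2) as [z [Sz [Hz1 Hz2]]].
  exists z; split; [exact Sz | apply join_least; eapply le_trans; eauto].
Qed.

Definition cond (P : Prop) (a : T) : T := sup (fun y => y = a /\ P).

Lemma cond_ge (P : Prop) a : P -> le a (cond P a).
Proof. intro; apply sup_ub; auto. Qed.

Lemma cond_le (P : Prop) a z : (P -> le a z) -> le (cond P a) z.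
Proof. intro H; apply sup_least; intros x [-> HP]; auto. Qed.

Lemma cond_compact (P : Prop) a : compact le a -> compact le (cond P a).
Proof.
  intro Ha; destruct (classic P) as [HP | HP].
  - replace (cond P a) with a; [exact Ha |].
    apply le_antisym; [apply cond_ge, HP | apply cond_le; intros; apply le_refl].
  - replace (cond P a) with bot; [apply bot_compact |].
    apply le_antisym; [apply Hbot | apply cond_le; tauto].
Qed.

Lemma cont_mono {X : Type} (leX : X -> X -> Prop) W f x y :
  scott_cont le leX W f -> W x -> W y -> leX x y -> le (f x) (f y).
Proof. intros [H _]; auto. Qed.

Lemma const_cont {X : Type} (leX : X -> X -> Prop) (W : X -> Prop) a :
  scott_cont le leX W (fun _ => a).
Proof.
  split; [intros; apply le_refl |].
  intros S _ [[s0 Hs0] _] x _; split.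
  - intros y [s [_ ->]]; apply le_refl.
  - intros z Hz; apply Hz; eauto.
Qed.

Lemma sup_cont {X : Type} (leX : X -> X -> Prop) (W : X -> Prop) (F : (X -> T) -> Prop) :
  (forall f, F f -> scott_cont le leX W f) ->
  scott_cont le leX W (fun x => sup (fun y => exists f, F f /\ y = f x)).
Proof.
  intro HF; split.
  - intros x y Wx Wy Hxy; apply sup_mono; intros r [f [Ff ->]].
    exists (f y); split; eauto; apply (cont_mono _ _ _ _ _ (HF f Ff)); auto.
  - intros S HW Hdir x Hx; split.
    + intros r [s [Ss ->]]; apply sup_mono; intros r [f [Ff ->]].
      exists (f x); split; eauto.
      apply (cont_mono _ _ _ _ _ (HF f Ff)); [apply HW, Ss | apply Hx | apply Hx, Ss].
    + intros z Hz; apply sup_least; intros r [f [Ff ->]].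
      apply (proj2 (HF f Ff) S HW Hdir x Hx); intros r [s [Ss ->]].
      eapply le_trans; [| apply Hz; exists s; split; eauto].
      apply sup_ub; eauto.
Qed.

Lemma join_cont {X : Type} (leX : X -> X -> Prop) (W : X -> Prop) (f g : X -> T) :
  scott_cont le leX W f -> scott_cont le leX W g ->
  scott_cont le leX W (fun x => join (f x) (g x)).
Proof.
  intros [Hf Cf] [Hg Cg]; split; [intros; apply join_mono; auto |].
  intros S HW Hdir x Hx; split.
  - intros r [s [Ss ->]]; destruct Hx as [Wx [Hub _]].
    apply join_mono; [apply Hf | apply Hg]; auto.
  - intros z Hz; apply join_least;
      [apply (proj2 (Cf S HW Hdir x Hx)) | apply (proj2 (Cg S HW Hdir x Hx))];
      intros r [s [Ss ->]]; eapply le_trans; [apply join_l | | apply join_r |];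
      apply Hz; eauto.
Qed.

(** * Compact elements denoted by types of Lambda_R *)

Notation K := (Kel le).

Fixpoint denR (r : tyR K) : T :=
  match r with
  | psiR a => proj1_sig a
  | omR => bot
  | meetR r s => join (denR r) (denR s)
  end.

Lemma denR_compact r : compact le (denR r).
Proof.
  induction r as [[a Ha] | | r IHr s IHs]; cbn; auto using bot_compact, join_compact.
Qed.

Definition denK (r : tyR K) : K := exist _ (denR r) (denR_compact r).

Lemma leR_denR r s : leR le r s -> le (denR s) (denR r).
Proof.
  induction 1 as [| | | | | | a [_ Hlub] | a [_ Hlub] | a b c [Hub Hlub] | a b c [Hub Hlub]];
    cbn; eauto using le_refl, le_trans, join_l, join_r, join_least.
  - apply Hlub; intros ? [].
  - apply join_least; apply Hub; auto.
  - apply Hlub; intros y [-> | ->]; [apply join_l | apply join_r].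
Qed.

Lemma leR_psi (a b : K) : le (proj1_sig a) (proj1_sig b) -> leR le (psiR b) (psiR a).
Proof.
  intro Hab; eapply leR_trans; [apply (leR_join1 le a b b) | apply leR_meet_l].
  split; [intros y [-> | ->]; auto using le_refl | intros z Hz; apply Hz; auto].
Qed.

Lemma leR_psi_denK r : leR le r (psiR (denK r)) /\ leR le (psiR (denK r)) r.
Proof.
  induction r as [a | | r1 [IH1 IH1'] r2 [IH2 IH2']].
  - split; apply leR_psi, le_refl.
  - assert (Hbot_lub : is_lub le (fun _ => False) (denR omR)).
    { split; [intros ? [] | intros; apply Hbot]. }
    split; [apply leR_bot2 | apply leR_bot1]; exact Hbot_lub.
  - pose proof (join_lub (denR r1) (denR r2)) as Hlub.
    split.
    + eapply leR_trans; [| apply (leR_join2 le (denK r1) (denK r2) (denK (meetR r1 r2)) Hlub)].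
      apply leR_glb; [apply (leR_trans _ _ r1) | apply (leR_trans _ _ r2)];
        auto using leR_meet_l, leR_meet_r.
    + eapply leR_trans; [apply (leR_join1 le (denK r1) (denK r2) (denK (meetR r1 r2)) Hlub) |].
      apply leR_glb; [apply (leR_trans _ _ (psiR (denK r1))) | apply (leR_trans _ _ (psiR (denK r2)))];
        auto using leR_meet_l, leR_meet_r.
Qed.

Lemma leR_complete r s : le (denR s) (denR r) -> leR le r s.
Proof.
  intro H; eapply leR_trans; [apply (leR_psi_denK r) |].
  eapply leR_trans; [apply (leR_psi (denK s) (denK r) H) | apply (leR_psi_denK s)].
Qed.

Lemma R_filter_iso : order_iso (@filter_incl _ _ : filterR le -> filterR le -> Prop) le.
Proof.
  apply (filter_order_iso _ _ _ _ (fun x r => le (denR r) x)).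
  - intros x; split; [| split]; cbn.
    + apply Hbot.
    + intros s t Hs Hst; eapply le_trans; [apply leR_denR, Hst | exact Hs].
    + intros; apply join_least; auto.
  - intros x y; split.
    + intros Hxy s Hs; eapply le_trans; eauto.
    + intros H; apply le_compact_approx; intros a [Ha Hax].
      apply (H (psiR (exist _ a Ha)) Hax).
  - intros F [Fom [Fup Fmeet]].
    exists (sup (fun y => exists r, F r /\ y = denR r)); intros s; split.
    + intro Hs.
      assert (Hdir : directed le (fun y => exists r, F r /\ y = denR r)).
      { split; [exists bot, omR; auto |].
        intros x y [r1 [F1 ->]] [r2 [F2 ->]].
        exists (denR (meetR r1 r2)); split; [eauto | split; [apply join_l | apply join_r]]. }
      destruct (compact_le_sup _ _ (denR_compact s) Hdir Hs) as [y [[r [Fr ->]] Hle]].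
      eapply Fup; [exact Fr | apply leR_complete, Hle].
    + intro Fs; apply sup_ub; eauto.
Qed.


(** * The levels C_n and their embedding-projection pairs *)

Notation CR := (Craw T).
Notation Cl := (Cle le).
Notation Cw := (Cwf le).
Notation e := (emb bot).
Notation p := (prj bot).

Lemma Cle_S n x y :
  Cl (S n) x y = ((forall c, Cw n c -> le (fst x c) (fst y c)) /\ Cl n (snd x) (snd y)).
Proof. reflexivity. Qed.

Lemma Cwf_S n x : Cw (S n) x = (scott_cont le (Cl n) (Cw n) (fst x) /\ Cw n (snd x)).
Proof. reflexivity. Qed.

Lemma emb_0 x : e 0 x = ((fun _ => bot), tt).
Proof. reflexivity. Qed.

Lemma emb_S n x : e (S n) x = ((fun c => fst x (p n c)), e n (snd x)).
Proof. reflexivity. Qed.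

Lemma prj_S n y : p (S n) y = ((fun c => fst y (e n c)), p n (snd y)).
Proof. reflexivity. Qed.

Lemma Cle_refl n c : Cl n c c.
Proof.
  induction n as [| n IH] in c |- *; [exact I |].
  rewrite Cle_S; auto using le_refl.
Qed.

Lemma Cle_trans n x y z : Cl n x y -> Cl n y z -> Cl n x z.
Proof.
  induction n as [| n IH] in x, y, z |- *; [auto |].
  rewrite !Cle_S; intros [H1 H2] [H3 H4]; split; eauto.
  intros c Hc; eapply le_trans; eauto.
Qed.

Fixpoint supC (n : nat) : (CR n -> Prop) -> CR n :=
  match n return ((CR n -> Prop) -> CR n) with
  | 0 => fun _ => tt
  | S m => fun S => ((fun c => sup (fun y => exists s, S s /\ y = fst s c)),
                     supC m (fun c0 => exists s, S s /\ c0 = snd s))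
  end.

Lemma fst_supC n Q c : fst (supC (S n) Q) c = sup (fun y => exists s, Q s /\ y = fst s c).
Proof. reflexivity. Qed.

Lemma snd_supC n Q : snd (supC (S n) Q) = supC n (fun c0 => exists s, Q s /\ c0 = snd s).
Proof. reflexivity. Qed.

Lemma supC_ub n Q s : Q s -> Cl n s (supC n Q).
Proof.
  induction n as [| n IH] in Q, s |- *; intro Qs; [exact I |].
  rewrite Cle_S; split; [intros c _; apply sup_ub | apply IH]; eauto.
Qed.

Lemma supC_least n Q z : (forall s, Q s -> Cl n s z) -> Cl n (supC n Q) z.
Proof.
  induction n as [| n IH] in Q, z |- *; intro H; [exact I |].
  rewrite Cle_S; split.
  - intros c Hc; apply sup_least; intros y [s [Qs ->]].
    apply (H s Qs); auto.
  - apply IH; intros c0 [s [Qs ->]]; apply (H s Qs).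
Qed.

Lemma supC_mono n Q Q' :
  (forall s, Q s -> exists s', Q' s' /\ Cl n s s') -> Cl n (supC n Q) (supC n Q').
Proof.
  intro H; apply supC_least; intros s Qs; destruct (H s Qs) as [s' [Q's Hs]].
  eapply Cle_trans; [exact Hs | apply supC_ub, Q's].
Qed.

Lemma supC_wf n Q : (forall s, Q s -> Cw n s) -> Cw n (supC n Q).
Proof.
  induction n as [| n IH] in Q |- *; intro HQ; [exact I |].
  rewrite Cwf_S; split; [| apply IH; intros c0 [s [Qs ->]]; apply (HQ s Qs)].
  replace (fst (supC (S n) Q))
    with (fun x => sup (fun y => exists f, (exists s, Q s /\ f = fst s) /\ y = f x)).
  - apply sup_cont; intros f [s [Qs ->]]; apply (HQ s Qs).
  - apply functional_extensionality; intro x; rewrite fst_supC; apply sup_ext; intro y; split.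
    + intros [f [[s [Qs ->]] ->]]; eauto.
    + intros [s [Qs ->]]; eauto.
Qed.

Lemma lub_in_le_supC n Q x :
  is_lub_in (Cw n) (Cl n) Q x -> (forall s, Q s -> Cw n s) -> Cl n x (supC n Q).
Proof.
  intros [_ [_ Hleast]] HQ; apply Hleast; [apply supC_wf, HQ |].
  intros s Qs; apply supC_ub, Qs.
Qed.

Lemma cont_comp {m n} (g : CR m -> CR n) (f : CR n -> T) :
  scott_cont le (Cl n) (Cw n) f ->
  (forall x, Cw m x -> Cw n (g x)) ->
  (forall x y, Cw m x -> Cw m y -> Cl m x y -> Cl n (g x) (g y)) ->
  (forall Q, (forall s, Q s -> Cw m s) ->
     Cl n (g (supC m Q)) (supC n (fun r => exists s, Q s /\ r = g s))) ->
  scott_cont le (Cl m) (Cw m) (fun x => f (g x)).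
Proof.
  intros Hf Hwf Hmono Hsup; split.
  - intros x y Wx Wy Hxy; apply (cont_mono _ _ _ _ _ Hf); auto.
  - intros Q HQ Hdir x Hx.
    assert (Himg : is_lub_in (Cw n) (Cl n) (fun r => exists s, Q s /\ r = g s) (g x)).
    { destruct Hx as [Wx [Hub Hleast]]; split; [auto | split].
      - intros r [s [Qs ->]]; apply Hmono; auto.
      - intros z Wz Hz; apply Cle_trans with (g (supC m Q)).
        + apply Hmono; [exact Wx | apply supC_wf, HQ |].
          apply lub_in_le_supC; [split; auto | exact HQ].
        + eapply Cle_trans; [apply Hsup, HQ | apply supC_least, Hz]. }
    assert (Himg_wf : forall r, (exists s, Q s /\ r = g s) -> Cw n r)
      by (intros r [s [Qs ->]]; apply Hwf, HQ, Qs).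
    destruct (proj2 Hf _ Himg_wf (directed_image _ _ _ g Q Hmono HQ Hdir) _ Himg)
      as [Hub Hleast].
    split.
    + intros r [s [Qs ->]]; apply Hub; eauto.
    + intros z Hz; apply Hleast; intros r [s' [[s [Qs ->]] ->]]; apply Hz; eauto.
Qed.

Lemma prj_supC n Q : (forall s, Q s -> Cw (S n) s) ->
  Cl n (p n (supC (S n) Q)) (supC n (fun r => exists s, Q s /\ r = p n s)).
Proof.
  induction n as [| n IH] in Q |- *; intro HQ; [exact I |].
  rewrite prj_S, Cle_S; split.
  - intros c _; cbn; apply sup_mono; intros y [s [Qs ->]].
    exists (fst (p (S n) s) c); split; [exists (p (S n) s); eauto | apply le_refl].
  - rewrite !snd_supC; eapply Cle_trans; [apply IH; intros s [s0 [Qs0 ->]]; apply HQ, Qs0 |].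
    apply supC_mono; intros r [s' [[s [Qs ->]] ->]].
    exists (snd (p (S n) s)); split; [exists (p (S n) s); eauto | apply Cle_refl].
Qed.

Lemma emb_supC n Q : (forall s, Q s -> Cw n s) ->
  Cl (S n) (e n (supC n Q)) (supC (S n) (fun r => exists s, Q s /\ r = e n s)).
Proof.
  induction n as [| n IH] in Q |- *; intro HQ.
  { rewrite emb_0, Cle_S; split; [intros; apply Hbot | exact I]. }
  rewrite emb_S, Cle_S; split.
  - intros c _; cbn; apply sup_mono; intros y [s [Qs ->]].
    exists (fst (e (S n) s) c); split; [exists (e (S n) s); eauto | apply le_refl].
  - cbn [snd]; rewrite (snd_supC n), (snd_supC (S n)).
    eapply Cle_trans; [apply IH; intros s [s0 [Qs0 ->]]; apply HQ, Qs0 |].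
    apply supC_mono; intros r [s' [[s [Qs ->]] ->]].
    exists (snd (e (S n) s)); split; [exists (e (S n) s); eauto | apply Cle_refl].
Qed.

Lemma emb_prj_wf_mono n :
  (forall c, Cw (S n) c -> Cw n (p n c)) /\
  (forall c, Cw n c -> Cw (S n) (e n c)) /\
  (forall c c', Cw (S n) c -> Cw (S n) c' -> Cl (S n) c c' -> Cl n (p n c) (p n c')) /\
  (forall c c', Cw n c -> Cw n c' -> Cl n c c' -> Cl (S n) (e n c) (e n c')).
Proof.
  induction n as [| n [Hpwf [Hewf [Hpmono Hemono]]]].
  { split; [intros; exact I |]; split; [| split; [intros; exact I |]].
    - intros c _; rewrite emb_0, Cwf_S; split; [apply const_cont | exact I].
    - intros c c' _ _ _; rewrite !emb_0, Cle_S; split; [intros; apply le_refl | exact I]. }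
  split; [| split; [| split]].
  - intros c Hc; rewrite prj_S, Cwf_S; rewrite Cwf_S in Hc; split; [| apply Hpwf, Hc].
    apply (cont_comp (e n) (fst c)); auto using emb_supC; apply Hc.
  - intros c Hc; rewrite emb_S, Cwf_S; rewrite Cwf_S in Hc; split; [| apply Hewf, Hc].
    apply (cont_comp (p n) (fst c)); auto using prj_supC; apply Hc.
  - intros c c' Hc Hc' H; rewrite !prj_S, Cle_S; rewrite Cle_S in H.
    rewrite Cwf_S in Hc, Hc'; split; cbn; [intros; apply H; auto | apply Hpmono; tauto].
  - intros c c' Hc Hc' H; rewrite !emb_S, Cle_S; rewrite Cle_S in H.
    rewrite Cwf_S in Hc, Hc'; split; cbn; [intros; apply H; auto | apply Hemono; tauto].
Qed.

Lemma prj_wf n c : Cw (S n) c -> Cw n (p n c).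
Proof. apply emb_prj_wf_mono. Qed.

Lemma emb_wf n c : Cw n c -> Cw (S n) (e n c).
Proof. apply emb_prj_wf_mono. Qed.

Lemma prj_mono n c c' : Cw (S n) c -> Cw (S n) c' -> Cl (S n) c c' -> Cl n (p n c) (p n c').
Proof. apply emb_prj_wf_mono. Qed.

Lemma emb_mono n c c' : Cw n c -> Cw n c' -> Cl n c c' -> Cl (S n) (e n c) (e n c').
Proof. apply emb_prj_wf_mono. Qed.

Lemma emb_prj_le n c : Cw (S n) c -> Cl (S n) (e n (p n c)) c.
Proof.
  induction n as [| n IH] in c |- *; intro Hc.
  - rewrite emb_0, Cle_S; split; [intros; apply Hbot | exact I].
  - rewrite prj_S, emb_S, Cle_S; rewrite Cwf_S in Hc; cbn; split.
    + intros c1 Hc1; apply (cont_mono _ _ _ _ _ (proj1 Hc)); auto using emb_wf, prj_wf.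
    + apply IH, Hc.
Qed.

(** * Denotation and satisfaction at level n *)

Fixpoint fstC (k : tyC K) : tyD K :=
  match k with prodC d _ => d | omC => omD | meetC a b => meetD (fstC a) (fstC b) end.

Fixpoint sndC (k : tyC K) : tyC K :=
  match k with prodC _ k' => k' | omC => omC | meetC a b => meetC (sndC a) (sndC b) end.

Fixpoint trivialD (d : tyD K) : Prop :=
  match d with
  | rD r | arrD _ r => le (denR r) bot
  | omD => True
  | meetD a b => trivialD a /\ trivialD b
  end.

Fixpoint trivialC (k : tyC K) : Prop :=
  match k with
  | prodC d k' => trivialD d /\ trivialC k'
  | omC => True
  | meetC a b => trivialC a /\ trivialC b
  end.

Fixpoint depthD (d : tyD K) : nat :=
  match d with
  | rD _ | omD => 0
  | arrD k _ => depthC k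
  | meetD a b => max (depthD a) (depthD b)
  end
with depthC (k : tyC K) : nat :=
  match k with
  | prodC d k' => S (max (depthD d) (depthC k'))
  | omC => 0
  | meetC a b => max (depthC a) (depthC b)
  end.

Fixpoint denD_by {n} (sat : CR n -> tyC K -> Prop) (d : tyD K) : CR n -> T :=
  match d with
  | rD r => fun _ => denR r
  | arrD k r => fun c => cond (sat c k) (denR r)
  | omD => fun _ => bot
  | meetD a b => fun c => join (denD_by sat a c) (denD_by sat b c)
  end.

Fixpoint satD_by {n} (den : tyC K -> CR n) (f : CR n -> T) (d : tyD K) : Prop :=
  match d with
  | rD r => le (denR r) (f (den omC))
  | arrD k r => le (denR r) (f (den k))
  | omD => True
  | meetD a b => satD_by den f a /\ satD_by den f b
  end.

(* [denC n k] is the element of C_n denoted by [k] and [satC n c k] says that [c]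
   satisfies [k]; both only see [k] up to depth [n], and a component cut off at
   level 0 is satisfied only when it is trivial, i.e. equivalent to omega. *)
Fixpoint level (n : nat) : (tyC K -> CR n) * (CR n -> tyC K -> Prop) :=
  match n return ((tyC K -> CR n) * (CR n -> tyC K -> Prop)) with
  | 0 => (fun _ => tt, fun _ k => trivialC k)
  | S m => ((fun k => (denD_by (snd (level m)) (fstC k), fst (level m) (sndC k))),
            (fun c k => satD_by (fst (level m)) (fst c) (fstC k) /\ snd (level m) (snd c) (sndC k)))
  end.

Definition denC n := fst (level n).
Definition satC n := snd (level n).
Definition denD n := denD_by (satC n).
Definition satD n := satD_by (denC n).

Lemma denC_S n k : denC (S n) k = (denD n (fstC k), denC n (sndC k)).
Proof. reflexivity. Qed.

Lemma satC_0 c k : satC 0 c k = trivialC k.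
Proof. reflexivity. Qed.

Lemma satC_S n c k : satC (S n) c k = (satD n (fst c) (fstC k) /\ satC n (snd c) (sndC k)).
Proof. reflexivity. Qed.

Lemma denD_rD n r c : denD n (rD r) c = denR r.
Proof. reflexivity. Qed.

Lemma denD_arr n k r c : denD n (arrD k r) c = cond (satC n c k) (denR r).
Proof. reflexivity. Qed.

Lemma denD_om n c : denD n omD c = bot.
Proof. reflexivity. Qed.

Lemma denD_meet n a b c : denD n (meetD a b) c = join (denD n a c) (denD n b c).
Proof. reflexivity. Qed.

Lemma satD_rD n f r : satD n f (rD r) = le (denR r) (f (denC n omC)).
Proof. reflexivity. Qed.

Lemma satD_arr n f k r : satD n f (arrD k r) = le (denR r) (f (denC n k)).
Proof. reflexivity. Qed.

Lemma satD_meet n f a b : satD n f (meetD a b) = (satD n f a /\ satD n f b).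
Proof. reflexivity. Qed.

Lemma satC_om n c : satC n c omC.
Proof.
  induction n as [| n IH] in c |- *; [exact I |].
  rewrite satC_S; split; [exact I | apply IH].
Qed.

Lemma satC_meet n c a b : satC n c (meetC a b) <-> satC n c a /\ satC n c b.
Proof.
  induction n as [| n IH] in c, a, b |- *; [rewrite !satC_0; cbn; tauto |].
  rewrite !satC_S; cbn [fstC sndC]; rewrite IH, satD_meet; tauto.
Qed.

Lemma denC_om_least n c : Cl n (denC n omC) c.
Proof.
  induction n as [| n IH] in c |- *; [exact I |].
  rewrite denC_S, Cle_S; split; [intros; apply Hbot | apply IH].
Qed.

Lemma denC_meet_l n a b : Cl n (denC n a) (denC n (meetC a b)).
Proof.
  induction n as [| n IH] in a, b |- *; [exact I |].
  rewrite !denC_S, Cle_S; cbn [fst snd fstC sndC]; split; [intros; rewrite denD_meet; apply join_l | apply IH].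
Qed.

Lemma denC_meet_r n a b : Cl n (denC n b) (denC n (meetC a b)).
Proof.
  induction n as [| n IH] in a, b |- *; [exact I |].
  rewrite !denC_S, Cle_S; cbn [fst snd fstC sndC]; split; [intros; rewrite denD_meet; apply join_r | apply IH].
Qed.

Lemma denC_meet_least n a b z :
  Cl n (denC n a) z -> Cl n (denC n b) z -> Cl n (denC n (meetC a b)) z.
Proof.
  induction n as [| n IH] in a, b, z |- *; [auto |].
  rewrite !denC_S, !Cle_S; cbn [fst snd fstC sndC]; intros [Ha Ha'] [Hb Hb']; split; [| apply IH; auto].
  intros c Hc; rewrite denD_meet; apply join_least; auto.
Qed.

Definition scott_open n (P : CR n -> Prop) : Prop :=
  (forall c c', Cw n c -> Cw n c' -> Cl n c c' -> P c -> P c') /\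
  (forall Q, (forall s, Q s -> Cw n s) -> directed (Cl n) Q -> P (supC n Q) ->
     exists s, Q s /\ P s).

Lemma cond_cont n (P : CR n -> Prop) a :
  scott_open n P -> scott_cont le (Cl n) (Cw n) (fun c => cond (P c) a).
Proof.
  intros [Hmono Hopen]; split.
  - intros x y Wx Wy Hxy; apply cond_le; intro; apply cond_ge; eauto.
  - intros Q HQ Hdir x Hx; split.
    + intros r [s [Qs ->]]; apply cond_le; intro; apply cond_ge.
      destruct Hx as [Wx [Hub _]]; apply Hmono with s; auto.
    + intros z Hz; apply cond_le; intro HP.
      assert (HPsup : P (supC n Q)).
      { eapply Hmono; [apply Hx | apply supC_wf, HQ | | exact HP].
        apply lub_in_le_supC; [exact Hx | exact HQ]. }
      destruct (Hopen Q HQ Hdir HPsup) as [s [Qs Ps]].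
      eapply le_trans; [apply (cond_ge _ a Ps) |]; apply Hz; eauto.
Qed.

Definition level_ok n : Prop :=
  (forall k, Cw n (denC n k)) /\ (forall k, scott_open n (fun c => satC n c k)).

Lemma denD_cont_of n : level_ok n -> forall d, scott_cont le (Cl n) (Cw n) (denD n d).
Proof.
  intros [_ Hopen] d; induction d as [r | k r | | a IHa b IHb].
  - apply const_cont.
  - apply cond_cont, Hopen.
  - apply const_cont.
  - apply join_cont; auto.
Qed.

Lemma satD_mono_of n : level_ok n -> forall f f' d,
  (forall c, Cw n c -> le (f c) (f' c)) -> satD n f d -> satD n f' d.
Proof.
  intros [Hwf _] f f' d H; induction d as [r | k r | | a IHa b IHb].
  - rewrite !satD_rD; intro; eapply le_trans; [eassumption | apply H, Hwf].
  - rewrite !satD_arr; intro; eapply le_trans; [eassumption | apply H, Hwf].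
  - intros _; exact I.
  - rewrite !satD_meet; tauto.
Qed.

Lemma satD_open_of n : level_ok n -> forall Q, (forall s, Q s -> Cw (S n) s) ->
  directed (Cl (S n)) Q ->
  forall d, satD n (fst (supC (S n) Q)) d -> exists s, Q s /\ satD n (fst s) d.
Proof.
  intros Hlev Q HQ Hdir; pose proof Hlev as [Hwf _].
  assert (Hdir_at : forall c, Cw n c -> directed le (fun y => exists s, Q s /\ y = fst s c)).
  { intros c Hc; apply (directed_image (Cl (S n)) le (Cw (S n)) (fun s => fst s c)); auto.
    intros x y _ _ Hxy; apply Hxy, Hc. }
  intro d; induction d as [r | k r | | a IHa b IHb].
  - rewrite satD_rD, fst_supC; intro H.
    destruct (compact_le_sup _ _ (denR_compact r) (Hdir_at _ (Hwf omC)) H)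
      as [y [[s [Qs ->]] Hy]].
    exists s; auto.
  - rewrite satD_arr, fst_supC; intro H.
    destruct (compact_le_sup _ _ (denR_compact r) (Hdir_at _ (Hwf k)) H)
      as [y [[s [Qs ->]] Hy]].
    exists s; auto.
  - intros _; destruct Hdir as [[s Qs] _]; exists s; split; [exact Qs | exact I].
  - rewrite satD_meet; intros [Ha Hb].
    destruct (IHa Ha) as [s1 [Q1 H1]], (IHb Hb) as [s2 [Q2 H2]].
    destruct (proj2 Hdir s1 s2 Q1 Q2) as [s [Qs [Hs1 Hs2]]].
    exists s; split; [exact Qs | rewrite satD_meet; split].
    + eapply satD_mono_of; [exact Hlev | apply Hs1 | exact H1].
    + eapply satD_mono_of; [exact Hlev | apply Hs2 | exact H2].
Qed.

Lemma satC_open_S n : level_ok n -> forall k, scott_open (S n) (fun c => satC (S n) c k).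
Proof.
  intros Hlev k; pose proof Hlev as [_ Hopen]; split.
  - intros c c' Hc Hc' Hcc'; rewrite !satC_S; rewrite Cwf_S in Hc, Hc'.
    intros [H1 H2]; split.
    + eapply satD_mono_of; [exact Hlev | apply Hcc' | exact H1].
    + eapply (proj1 (Hopen (sndC k))); [apply Hc | apply Hc' | apply Hcc' | exact H2].
  - intros Q HQ Hdir; rewrite satC_S, snd_supC; intros [H1 H2].
    destruct (satD_open_of n Hlev Q HQ Hdir _ H1) as [s1 [Q1 Hs1]].
    destruct (proj2 (Hopen (sndC k)) (fun c0 => exists s, Q s /\ c0 = snd s)) as [c0 [[s2 [Q2 ->]] Hs2]].
    + intros c0 [s [Qs ->]]; apply HQ, Qs.
    + apply (directed_image (Cl (S n)) (Cl n) (Cw (S n)) snd); auto.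
      intros x y _ _ Hxy; apply Hxy.
    + exact H2.
    + destruct (proj2 Hdir s1 s2 Q1 Q2) as [s [Qs [Hs1s Hs2s]]].
      exists s; split; [exact Qs | rewrite satC_S; split].
      * eapply satD_mono_of; [exact Hlev | apply Hs1s | exact Hs1].
      * eapply (proj1 (Hopen (sndC k))); [apply HQ, Q2 | apply HQ, Qs | apply Hs2s | exact Hs2].
Qed.

Lemma level_ok_all n : level_ok n.
Proof.
  induction n as [| n IH].
  - split; [intros; exact I | intros k; split].
    + intros c c' _ _ _ H; exact H.
    + intros Q _ [[s Qs] _] H; exists s; auto.
  - split; [| apply satC_open_S, IH].
    intros k; rewrite denC_S, Cwf_S; split; [apply denD_cont_of, IH | apply IH].
Qed.

Lemma denC_wf n k : Cw n (denC n k).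
Proof. apply level_ok_all. Qed.

Lemma satC_mono n c c' k : Cw n c -> Cw n c' -> Cl n c c' -> satC n c k -> satC n c' k.
Proof. apply level_ok_all. Qed.

Lemma satC_open n Q : (forall s, Q s -> Cw n s) -> directed (Cl n) Q ->
  forall k, satC n (supC n Q) k -> exists s, Q s /\ satC n s k.
Proof. intros HQ Hdir k; apply level_ok_all; auto. Qed.

Lemma denD_cont n d : scott_cont le (Cl n) (Cw n) (denD n d).
Proof. apply denD_cont_of, level_ok_all. Qed.

Lemma satD_mono n f f' d :
  (forall c, Cw n c -> le (f c) (f' c)) -> satD n f d -> satD n f' d.
Proof. apply satD_mono_of, level_ok_all. Qed.

Lemma satD_bot_trivial {n} (den : tyC K -> CR n) d :
  satD_by den (fun _ => bot) d <-> trivialD d.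
Proof. induction d; cbn; tauto. Qed.

Lemma trivialC_split k : trivialC k <-> trivialD (fstC k) /\ trivialC (sndC k).
Proof. induction k; cbn; tauto. Qed.

Lemma denD_emb_of n : (forall c k, Cw n c -> (satC (S n) (e n c) k <-> satC n c k)) ->
  forall c d, Cw n c -> denD (S n) d (e n c) = denD n d c.
Proof.
  intros Hsat c d Hc; induction d as [r | k r | | a IHa b IHb]; [reflexivity | | reflexivity |].
  - rewrite !denD_arr; apply sup_ext; intro y; rewrite Hsat; tauto.
  - rewrite !denD_meet; congruence.
Qed.

Lemma satD_prj_of n f : scott_cont le (Cl n) (Cw n) f ->
  (forall k, Cl n (p n (denC (S n) k)) (denC n k) /\ Cl n (denC n k) (p n (denC (S n) k))) ->
  forall d, satD (S n) (fun c => f (p n c)) d <-> satD n f d.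
Proof.
  intros Hf Hprj.
  assert (Heq : forall k, f (p n (denC (S n) k)) = f (denC n k)).
  { intro k; apply le_antisym; apply (cont_mono _ _ _ _ _ Hf);
      auto using prj_wf, denC_wf; apply Hprj. }
  intro d; induction d as [r | k r | | a IHa b IHb].
  - rewrite !satD_rD, Heq; tauto.
  - rewrite !satD_arr, Heq; tauto.
  - cbn; tauto.
  - rewrite !satD_meet; tauto.
Qed.

Lemma emb_invariance n :
  (forall c k, Cw n c -> (satC (S n) (e n c) k <-> satC n c k)) /\
  (forall k, Cl n (p n (denC (S n) k)) (denC n k) /\ Cl n (denC n k) (p n (denC (S n) k))).
Proof.
  induction n as [| n [IHsat IHprj]].
  - split; [| split; exact I].
    intros c k _; rewrite emb_0, satC_S, !satC_0, (trivialC_split k); cbn [fst snd].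
    unfold satD; rewrite satD_bot_trivial; tauto.
  - split.
    + intros c k Hc; rewrite emb_S, (satC_S (S n)), (satC_S n c); cbn [fst snd].
      rewrite Cwf_S in Hc; rewrite IHsat by apply Hc.
      rewrite satD_prj_of; [tauto | apply Hc | exact IHprj].
    + intros k; rewrite prj_S, !denC_S, !Cle_S; cbn [fst snd].
      split; split; try apply IHprj;
        intros c Hc; rewrite denD_emb_of; auto using le_refl.
Qed.

Lemma satC_emb n c k : Cw n c -> (satC (S n) (e n c) k <-> satC n c k).
Proof. apply emb_invariance. Qed.

Lemma denD_emb n c d : Cw n c -> denD (S n) d (e n c) = denD n d c.
Proof. apply denD_emb_of, emb_invariance. Qed.

Lemma prj_denC n k :
  Cl n (p n (denC (S n) k)) (denC n k) /\ Cl n (denC n k) (p n (denC (S n) k)).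
Proof. apply emb_invariance. Qed.

Lemma denD_le_of_satD n : (forall c k, Cw n c -> satC n c k -> Cl n (denC n k) c) ->
  forall f d, scott_cont le (Cl n) (Cw n) f -> satD n f d ->
  forall c, Cw n c -> le (denD n d c) (f c).
Proof.
  intros Hbelow f d Hf; induction d as [r | k r | | a IHa b IHb]; intros Hd c Hc.
  - rewrite denD_rD; rewrite satD_rD in Hd; eapply le_trans; [exact Hd |].
    apply (cont_mono _ _ _ _ _ Hf); auto using denC_wf, denC_om_least.
  - rewrite denD_arr; rewrite satD_arr in Hd; apply cond_le; intro Hk.
    eapply le_trans; [exact Hd |]; apply (cont_mono _ _ _ _ _ Hf); auto using denC_wf.
  - apply Hbot.
  - rewrite denD_meet; rewrite satD_meet in Hd; apply join_least; [apply IHa | apply IHb]; tauto.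
Qed.

Lemma denC_le_of_satC n c k : Cw n c -> satC n c k -> Cl n (denC n k) c.
Proof.
  induction n as [| n IH] in c, k |- *; intros Hc Hk; [exact I |].
  rewrite denC_S, Cle_S; rewrite satC_S in Hk; rewrite Cwf_S in Hc; cbn [fst snd]; split.
  - intros c1 Hc1; eapply denD_le_of_satD; eauto; tauto.
  - apply IH; tauto.
Qed.

Lemma depth_fstC_sndC k n :
  depthC k <= S n -> depthD (fstC k) <= n /\ depthC (sndC k) <= n.
Proof.
  induction k as [d k' | | a IHa b IHb]; cbn; intro H; [lia | lia |].
  destruct IHa, IHb; lia.
Qed.

Lemma trivialC_depth0 k : depthC k <= 0 -> trivialC k.
Proof.
  induction k as [d k' | | a IHa b IHb]; cbn; intro H; [lia | exact I |].
  split; [apply IHa | apply IHb]; lia.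
Qed.

Lemma satC_denC n k : depthC k <= n -> satC n (denC n k) k.
Proof.
  assert (HD : forall m, (forall k, depthC k <= m -> satC m (denC m k) k) ->
                 forall d, depthD d <= m -> satD m (denD m d) d).
  { intros m HC d; induction d as [r | k' r | | a IHa b IHb]; cbn [depthD]; intro Hd.
    - rewrite satD_rD, denD_rD; apply le_refl.
    - rewrite satD_arr, denD_arr; apply cond_ge, HC, Hd.
    - exact I.
    - rewrite satD_meet; split; eapply satD_mono; [| apply IHa; lia | | apply IHb; lia];
        intros; rewrite denD_meet; [apply join_l | apply join_r]. }
  induction n as [| n IH] in k |- *; intro Hk.
  - apply trivialC_depth0, Hk.
  - apply depth_fstC_sndC in Hk; rewrite denC_S, satC_S; cbn [fst snd].
    split; [apply HD | apply IH]; tauto.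
Qed.

Lemma denD_trivial d : trivialD d -> forall n c, le (denD n d c) bot.
Proof.
  induction d as [r | k r | | a IHa b IHb]; cbn; intros Hd n c.
  - exact Hd.
  - apply cond_le; auto.
  - apply le_refl.
  - apply join_least; [apply IHa | apply IHb]; tauto.
Qed.

Lemma denD_S_le_prj n d : depthD d <= n ->
  forall c, Cw (S n) c -> le (denD (S n) d c) (denD n d (p n c)).
Proof.
  induction d as [r | k r | | a IHa b IHb]; cbn [depthD]; intros Hd c Hc.
  - apply le_refl.
  - rewrite !denD_arr; apply cond_le; intro Hk; apply cond_ge.
    apply denC_le_of_satC in Hk; [| exact Hc].
    apply satC_mono with (denC n k); auto using denC_wf, prj_wf, satC_denC.
    eapply Cle_trans; [apply prj_denC | apply prj_mono; auto using denC_wf].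
  - apply le_refl.
  - rewrite !denD_meet; apply join_mono; [apply IHa | apply IHb]; auto; lia.
Qed.

Lemma denC_S_le_emb n k : depthC k <= n -> Cl (S n) (denC (S n) k) (e n (denC n k)).
Proof.
  induction n as [| n IH] in k |- *; intro Hk.
  - rewrite denC_S, emb_0, Cle_S; cbn [fst snd]; split; [| exact I].
    intros c _; apply denD_trivial, trivialC_split, trivialC_depth0, Hk.
  - apply depth_fstC_sndC in Hk; rewrite (denC_S (S n)), emb_S, Cle_S, denC_S; cbn [fst snd].
    split; [intros c Hc; apply denD_S_le_prj | apply IH]; tauto.
Qed.

Lemma denD_prj_le_S n d c : Cw (S n) c -> le (denD n d (p n c)) (denD (S n) d c).
Proof.
  intro Hc; induction d as [r | k r | | a IHa b IHb].
  - apply le_refl.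
  - rewrite !denD_arr; apply cond_le; intro Hk; apply cond_ge.
    apply satC_mono with (e n (p n c)); auto using emb_wf, prj_wf, emb_prj_le.
    apply satC_emb; auto using prj_wf.
  - apply le_refl.
  - rewrite !denD_meet; apply join_mono; auto.
Qed.

Lemma emb_denC_le n k : Cl (S n) (e n (denC n k)) (denC (S n) k).
Proof.
  induction n as [| n IH] in k |- *.
  - rewrite emb_0, Cle_S; split; [intros; apply Hbot | exact I].
  - rewrite emb_S, (denC_S (S n)), Cle_S, denC_S; cbn [fst snd].
    split; [intros c Hc; apply denD_prj_le_S, Hc | apply IH].
Qed.

(** * Soundness and completeness of the type theories *)

Lemma trivialD_iff d : trivialD d <-> forall n c, Cw n c -> le (denD n d c) bot.
Proof.
  split; [intros Hd n c _; apply denD_trivial, Hd |].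
  induction d as [r | k r | | a IHa b IHb]; cbn [trivialD]; intro H.
  - apply (H 0 tt I).
  - eapply le_trans; [| apply (H (depthC k) _ (denC_wf _ k))].
    rewrite denD_arr; apply cond_ge, satC_denC; lia.
  - exact I.
  - split; [apply IHa | apply IHb]; intros n c Hc; eapply le_trans; try apply (H n c Hc);
      rewrite denD_meet; [apply join_l | apply join_r].
Qed.

Definition sem_leD (d1 d2 : tyD K) : Prop := forall n,
  (forall c, Cw n c -> le (denD n d2 c) (denD n d1 c)) /\
  (forall f, scott_cont le (Cl n) (Cw n) f -> satD n f d1 -> satD n f d2).

Definition sem_leC (k1 k2 : tyC K) : Prop := forall n,
  Cl n (denC n k2) (denC n k1) /\ (forall c, Cw n c -> satC n c k1 -> satC n c k2).

Lemma sem_leD_R r1 r2 : leR le r1 r2 -> sem_leD (rD r1) (rD r2).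
Proof.
  intros H n; pose proof (leR_denR _ _ H) as Hden; split.
  - intros c _; rewrite !denD_rD; exact Hden.
  - intros f _; rewrite !satD_rD; apply le_trans, Hden.
Qed.

Lemma sem_leD_refl d : sem_leD d d.
Proof. intro n; split; auto using le_refl. Qed.

Lemma sem_leD_trans d1 d2 d3 : sem_leD d1 d2 -> sem_leD d2 d3 -> sem_leD d1 d3.
Proof.
  intros H12 H23 n; destruct (H12 n) as [Hden12 Hsat12], (H23 n) as [Hden23 Hsat23].
  split; [intros; eapply le_trans; eauto | auto].
Qed.

Lemma sem_leD_meet_l d1 d2 : sem_leD (meetD d1 d2) d1.
Proof.
  intro n; split; [intros; rewrite denD_meet; apply join_l | intros f _; rewrite satD_meet; tauto].
Qed.

Lemma sem_leD_meet_r d1 d2 : sem_leD (meetD d1 d2) d2.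
Proof.
  intro n; split; [intros; rewrite denD_meet; apply join_r | intros f _; rewrite satD_meet; tauto].
Qed.

Lemma sem_leD_top d : sem_leD d omD.
Proof. intro n; split; [intros; rewrite denD_om; apply Hbot | intros; exact I]. Qed.

Lemma sem_leD_glb d d1 d2 : sem_leD d d1 -> sem_leD d d2 -> sem_leD d (meetD d1 d2).
Proof.
  intros H1 H2 n; destruct (H1 n) as [Hden1 Hsat1], (H2 n) as [Hden2 Hsat2]; split.
  - intros; rewrite denD_meet; apply join_least; auto.
  - intros; rewrite satD_meet; auto.
Qed.

Lemma sem_leD_om_arr : sem_leD omD (arrD omC omR).
Proof.
  intro n; split.
  - intros; rewrite denD_arr, denD_om; apply cond_le; intros; apply le_refl.
  - intros; rewrite satD_arr; apply Hbot.
Qed.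

Lemma sem_leD_psi_arr a : sem_leD (rD (psiR a)) (arrD omC (psiR a)).
Proof.
  intro n; split; [| intros f _; rewrite satD_arr, satD_rD; auto].
  intros; rewrite denD_arr, denD_rD; apply cond_le; intros; apply le_refl.
Qed.

Lemma sem_leD_arr_psi a : sem_leD (arrD omC (psiR a)) (rD (psiR a)).
Proof.
  intro n; split; [| intros f _; rewrite satD_arr, satD_rD; auto].
  intros; rewrite denD_arr, denD_rD; apply cond_ge, satC_om.
Qed.

Lemma sem_leD_arr_meet k r1 r2 :
  sem_leD (meetD (arrD k r1) (arrD k r2)) (arrD k (meetR r1 r2)).
Proof.
  intro n; split.
  - intros c _; rewrite denD_meet, !denD_arr; apply cond_le; intro Hk; cbn.
    apply join_mono; apply cond_ge, Hk.
  - intros f _; rewrite satD_meet, !satD_arr; intros [H1 H2]; apply join_least; auto.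
Qed.

Lemma sem_leD_arr k1 k2 r1 r2 :
  sem_leC k2 k1 -> leR le r1 r2 -> sem_leD (arrD k1 r1) (arrD k2 r2).
Proof.
  intros Hk Hr n; pose proof (leR_denR _ _ Hr) as Hden; destruct (Hk n) as [Hdenk Hsatk].
  split.
  - intros c Hc; rewrite !denD_arr; apply cond_le; intro Hc2.
    eapply le_trans; [exact Hden | apply cond_ge; auto].
  - intros f Hf; rewrite !satD_arr; intro H.
    eapply le_trans; [exact Hden | eapply le_trans; [exact H |]].
    apply (cont_mono _ _ _ _ _ Hf); auto using denC_wf.
Qed.

Lemma sem_leC_refl k : sem_leC k k.
Proof. intro n; split; auto using Cle_refl. Qed.

Lemma sem_leC_trans k1 k2 k3 : sem_leC k1 k2 -> sem_leC k2 k3 -> sem_leC k1 k3.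
Proof.
  intros H12 H23 n; destruct (H12 n) as [Hden12 Hsat12], (H23 n) as [Hden23 Hsat23].
  split; [eapply Cle_trans; eauto | auto].
Qed.

Lemma sem_leC_meet_l k1 k2 : sem_leC (meetC k1 k2) k1.
Proof. intro n; split; [apply denC_meet_l | intros c _; rewrite satC_meet; tauto]. Qed.

Lemma sem_leC_meet_r k1 k2 : sem_leC (meetC k1 k2) k2.
Proof. intro n; split; [apply denC_meet_r | intros c _; rewrite satC_meet; tauto]. Qed.

Lemma sem_leC_top k : sem_leC k omC.
Proof. intro n; split; [apply denC_om_least | intros; apply satC_om]. Qed.

Lemma sem_leC_glb k k1 k2 : sem_leC k k1 -> sem_leC k k2 -> sem_leC k (meetC k1 k2).
Proof.
  intros H1 H2 n; destruct (H1 n) as [Hden1 Hsat1], (H2 n) as [Hden2 Hsat2].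
  split; [apply denC_meet_least; auto | intros; rewrite satC_meet; auto].
Qed.

Lemma sem_leC_om_prod : sem_leC omC (prodC omD omC).
Proof.
  intros [| n]; split; [exact I | | apply Cle_refl | auto].
  intros c _ _; rewrite satC_0; cbn; auto.
Qed.

Lemma sem_leC_prod_meet d1 d2 k1 k2 :
  sem_leC (meetC (prodC d1 k1) (prodC d2 k2)) (prodC (meetD d1 d2) (meetC k1 k2)).
Proof.
  intros [| n]; split; [exact I | | apply Cle_refl | auto].
  intros c _; rewrite !satC_0; cbn; tauto.
Qed.

Lemma sem_leC_prod d1 d2 k1 k2 :
  sem_leD d1 d2 -> sem_leC k1 k2 -> sem_leC (prodC d1 k1) (prodC d2 k2).
Proof.
  intros Hd Hk [| n].
  - split; [exact I | intros c _; rewrite !satC_0; cbn; intros [Hd1 Hk1]; split].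
    + rewrite trivialD_iff in Hd1 |- *; intros n c' Hc'.
      eapply le_trans; [apply (Hd n), Hc' | apply Hd1, Hc'].
    + apply (proj2 (Hk 0) tt I), Hk1.
  - destruct (Hd n) as [Hdend Hsatd], (Hk n) as [Hdenk Hsatk]; split.
    + rewrite !denC_S, Cle_S; split; auto.
    + intros c Hc; rewrite !satC_S, Cwf_S in *; cbn [fstC sndC].
      intros [H1 H2]; split; [apply Hsatd | apply Hsatk]; tauto.
Qed.

Scheme leD_mut := Induction for leD Sort Prop
with leC_mut := Induction for leC Sort Prop.
Combined Scheme le_mut from leD_mut, leC_mut.

Lemma le_sound :
  (forall d1 d2, leD le d1 d2 -> sem_leD d1 d2) /\
  (forall k1 k2, leC le k1 k2 -> sem_leC k1 k2).
Proof.
  apply (le_mut _ le (fun d1 d2 _ => sem_leD d1 d2) (fun k1 k2 _ => sem_leC k1 k2)); intros;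
    eauto using sem_leD_R, sem_leD_refl, sem_leD_trans, sem_leD_meet_l, sem_leD_meet_r,
      sem_leD_top, sem_leD_glb, sem_leD_om_arr, sem_leD_psi_arr, sem_leD_arr_psi,
      sem_leD_arr_meet, sem_leD_arr, sem_leC_refl, sem_leC_trans, sem_leC_meet_l,
      sem_leC_meet_r, sem_leC_top, sem_leC_glb, sem_leC_om_prod, sem_leC_prod_meet,
      sem_leC_prod.
Qed.

Lemma leC_prod_fstC_sndC k :
  leC le k (prodC (fstC k) (sndC k)) /\ leC le (prodC (fstC k) (sndC k)) k.
Proof.
  induction k as [d k' | | a [IHa1 IHa2] b [IHb1 IHb2]]; cbn.
  - split; apply leC_refl.
  - split; [apply leC_om_prod | apply leC_top].
  - split.
    + eapply leC_trans; [| apply leC_prod_meet].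
      apply leC_glb; [eapply leC_trans; [apply leC_meet_l | exact IHa1]
                     | eapply leC_trans; [apply leC_meet_r | exact IHb1]].
    + apply leC_glb.
      * eapply leC_trans; [| exact IHa2]; apply leC_prod; [apply leD_meet_l | apply leC_meet_l].
      * eapply leC_trans; [| exact IHb2]; apply leC_prod; [apply leD_meet_r | apply leC_meet_r].
Qed.

Lemma leD_rD_arr r : leD le (rD r) (arrD omC r) /\ leD le (arrD omC r) (rD r).
Proof.
  destruct (leR_psi_denK r) as [H1 H2]; split.
  - eapply leD_trans; [apply leD_R, H1 |].
    eapply leD_trans; [apply leD_psi_arr | apply leD_arr; [apply leC_refl | exact H2]].
  - eapply leD_trans; [| apply leD_R, H2].
    eapply leD_trans; [| apply leD_arr_psi]; apply leD_arr; [apply leC_refl | exact H1].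
Qed.

Lemma leD_om_arr_trivial k r : le (denR r) bot -> leD le omD (arrD k r).
Proof.
  intro H; eapply leD_trans; [apply leD_om_arr |].
  apply leD_arr; [apply leC_top | apply leR_complete, H].
Qed.

Lemma leD_om_trivial d : trivialD d -> leD le omD d.
Proof.
  induction d as [r | k r | | a IHa b IHb]; cbn; intro H.
  - eapply leD_trans; [apply leD_om_arr_trivial, H | apply leD_rD_arr].
  - apply leD_om_arr_trivial, H.
  - apply leD_refl.
  - apply leD_glb; tauto.
Qed.

Lemma leC_om_trivial k : trivialC k -> leC le omC k.
Proof.
  induction k as [d k' | | a IHa b IHb]; cbn; intro H.
  - eapply leC_trans; [apply leC_om_prod |].
    apply leC_prod; [apply leD_om_trivial | apply IHk']; tauto.
  - apply leC_refl.
  - apply leC_glb; tauto.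
Qed.

Lemma denD_compact n d c : compact le (denD n d c).
Proof.
  induction d as [r | k r | | a IHa b IHb].
  - apply denR_compact.
  - apply cond_compact, denR_compact.
  - apply bot_compact.
  - apply join_compact; auto.
Qed.

Lemma leD_arr_of_le n : (forall k' k, satC n (denC n k') k -> leC le k' k) ->
  forall d k r, le (denR r) (denD n d (denC n k)) -> leD le d (arrD k r).
Proof.
  intros HC d; induction d as [r1 | k1 r1 | | a IHa b IHb]; intros k r H.
  - eapply leD_trans; [apply leD_rD_arr |].
    apply leD_arr; [apply leC_top | apply leR_complete, H].
  - rewrite denD_arr in H; destruct (classic (satC n (denC n k) k1)) as [Hk | Hk].
    + apply leD_arr; [apply HC, Hk |]; apply leR_complete.
      eapply le_trans; [exact H | apply cond_le; intros; apply le_refl].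
    + eapply leD_trans; [apply leD_top |]; apply leD_om_arr_trivial.
      eapply le_trans; [exact H | apply cond_le; tauto].
  - eapply leD_trans; [apply leD_top | apply leD_om_arr_trivial, H].
  - rewrite denD_meet in H.
    set (ka := exist _ _ (denD_compact n a (denC n k)) : K).
    set (kb := exist _ _ (denD_compact n b (denC n k)) : K).
    eapply leD_trans; [| apply leD_arr; [apply leC_refl |
      apply (leR_complete (meetR (psiR ka) (psiR kb)) r H)]].
    eapply leD_trans; [| apply leD_arr_meet].
    apply leD_glb; [eapply leD_trans; [apply leD_meet_l | apply IHa, le_refl]
                   | eapply leD_trans; [apply leD_meet_r | apply IHb, le_refl]].
Qed.

Lemma leC_complete n k' k : satC n (denC n k') k -> leC le k' k.
Proof.
  induction n as [| n IH] in k', k |- *; intro H.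
  - rewrite satC_0 in H; eapply leC_trans; [apply leC_top | apply leC_om_trivial, H].
  - rewrite denC_S, satC_S in H; cbn [fst snd] in H; destruct H as [H1 H2].
    eapply leC_trans; [apply leC_prod_fstC_sndC |].
    eapply leC_trans; [| apply leC_prod_fstC_sndC].
    apply leC_prod; [| apply IH, H2].
    clear H2; induction (fstC k) as [r | k1 r | | a IHa b IHb].
    + rewrite satD_rD in H1; eapply leD_trans; [| apply leD_rD_arr].
      apply (leD_arr_of_le n IH), H1.
    + apply (leD_arr_of_le n IH), H1.
    + apply leD_top.
    + rewrite satD_meet in H1; apply leD_glb; tauto.
Qed.

Lemma leD_arr_complete n d k r : le (denR r) (denD n d (denC n k)) -> leD le d (arrD k r).
Proof. apply leD_arr_of_le; intros; eapply leC_complete; eauto. Qed.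

(** * Algebraicity of C_n and the inverse limits *)

Definition approxC n (c : CR n) (s : CR n) : Prop :=
  exists k, depthC k <= n /\ s = denC n k /\ Cl n (denC n k) c.

Lemma approxC_wf n c s : approxC n c s -> Cw n s.
Proof. intros [k [_ [-> _]]]; apply denC_wf. Qed.

Lemma approxC_directed n c : directed (Cl n) (approxC n c).
Proof.
  split.
  - exists (denC n omC), omC; split; [cbn; lia | split; [reflexivity | apply denC_om_least]].
  - intros x y [k1 [D1 [-> H1]]] [k2 [D2 [-> H2]]]; exists (denC n (meetC k1 k2)); split.
    + exists (meetC k1 k2); split; [cbn; lia | split; [reflexivity | apply denC_meet_least; auto]].
    + split; [apply denC_meet_l | apply denC_meet_r].
Qed.

Lemma compact_le_cont_approx n f c a :
  scott_cont le (Cl n) (Cw n) f -> is_lub_in (Cw n) (Cl n) (approxC n c) c ->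
  compact le a -> le a (f c) ->
  exists k, depthC k <= n /\ Cl n (denC n k) c /\ le a (f (denC n k)).
Proof.
  intros Hf Hc Ha Hac.
  assert (Hdir : directed le (fun y => exists s, approxC n c s /\ y = f s)).
  { apply (directed_image (Cl n) le (Cw n));
      [apply (proj1 Hf) | apply approxC_wf | apply approxC_directed]. }
  pose proof (proj2 Hf _ (approxC_wf n c) (approxC_directed n c) c Hc) as Hlub.
  destruct (Ha _ Hdir _ Hlub Hac) as [y [[s [[k [Dk [-> Hk]]] ->]] Hay]].
  exists k; auto.
Qed.

Lemma denC_step_le n k (a : K) f c :
  scott_cont le (Cl n) (Cw n) f -> le (proj1_sig a) (f (denC n k)) ->
  Cl (S n) (denC (S n) (prodC (arrD k (psiR a)) omC)) (f, c).
Proof.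
  intros Hf Ha; rewrite denC_S, Cle_S; cbn [fst snd fstC sndC].
  split; [| apply denC_om_least].
  intros c' Hc'; rewrite denD_arr; apply cond_le; intro Hk.
  eapply le_trans; [exact Ha |].
  apply (cont_mono _ _ _ _ _ Hf); auto using denC_wf, denC_le_of_satC.
Qed.

Lemma approxC_lub n c : Cw n c -> is_lub_in (Cw n) (Cl n) (approxC n c) c.
Proof.
  induction n as [| n IH] in c |- *; intro Hc.
  { split; [exact I | split; [intros s _ | intros z _ _]; exact I]. }
  split; [exact Hc | split; [intros s [k [_ [-> H]]]; exact H |]].
  intros z Hz Hub; destruct c as [f c0]; rewrite Cwf_S in Hc; destruct Hc as [Hf Hc0].
  rewrite Cle_S; split; cbn [fst snd].
  - intros c1 Hc1; apply le_compact_approx; intros a [Ha Hac].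
    destruct (compact_le_cont_approx n f c1 a Hf (IH c1 Hc1) Ha Hac) as [k [Dk [Hk Hak]]].
    set (ka := exist _ a Ha : K).
    assert (Hin : approxC (S n) (f, c0) (denC (S n) (prodC (arrD k (psiR ka)) omC))).
    { exists (prodC (arrD k (psiR ka)) omC); split; [cbn; lia | split; [reflexivity |]].
      apply denC_step_le; [exact Hf | exact Hak]. }
    pose proof (proj1 (Hub _ Hin) c1 Hc1) as Hle; rewrite denC_S in Hle; cbn [fst fstC] in Hle.
    eapply le_trans; [| exact Hle]; rewrite denD_arr; apply cond_ge.
    apply satC_mono with (denC n k); auto using denC_wf, satC_denC.
  - apply (IH c0 Hc0); [apply Hz |].
    intros s [k0 [Dk0 [-> Hk0]]].
    assert (Hin : approxC (S n) (f, c0) (denC (S n) (prodC omD k0))).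
    { exists (prodC omD k0); split; [cbn; lia | split; [reflexivity |]].
      rewrite denC_S, Cle_S; split; [intros; apply Hbot | exact Hk0]. }
    apply (Hub _ Hin).
Qed.

Definition satDlim (x : Dlim le bot) (d : tyD K) : Prop :=
  forall n c, Cw n c -> le (denD n d c) (proj1_sig x n c).

Lemma satDlim_filter x : is_filter (leD le) omD meetD (satDlim x).
Proof.
  split; [| split].
  - intros n c _; rewrite denD_om; apply Hbot.
  - intros d1 d2 H Hd n c Hc; eapply le_trans; [| apply H, Hc].
    apply (proj1 (proj1 le_sound d1 d2 Hd n)), Hc.
  - intros d1 d2 H1 H2 n c Hc; rewrite denD_meet; apply join_least; auto.
Qed.

Lemma satDlim_arr_of_le (x : Dlim le bot) n k r :
  le (denR r) (proj1_sig x n (denC n k)) -> satDlim x (arrD k r).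
Proof.
  destruct x as [x Hx]; cbn; intro Hn.
  assert (Hup : forall m, n <= m -> le (denR r) (x m (denC m k))).
  { intros m Hm; induction Hm as [| m Hm IH]; [exact Hn |].
    eapply le_trans; [exact IH |]; rewrite (proj2 (Hx m)) by apply denC_wf.
    apply (cont_mono _ _ _ _ _ (proj1 (Hx (S m)))); auto using emb_wf, denC_wf, emb_denC_le. }
  intros m c Hc; rewrite denD_arr; apply cond_le; revert c Hc.
  apply (nat_ind_down (fun m => forall c, Cw m c -> satC m c k -> le (denR r) (x m c)) n).
  - intros m' Hm' c Hc Hk; eapply le_trans; [apply Hup, Hm' |].
    apply (cont_mono _ _ _ _ _ (proj1 (Hx m'))); auto using denC_wf, denC_le_of_satC.
  - intros m' IH c Hc Hk; rewrite (proj2 (Hx m')) by exact Hc.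
    apply IH; [apply emb_wf, Hc | apply satC_emb; assumption].
Qed.

Lemma satDlim_arr (x : Dlim le bot) n k r : depthC k <= n ->
  satDlim x (arrD k r) <-> le (denR r) (proj1_sig x n (denC n k)).
Proof.
  intro Hk; split; [| apply satDlim_arr_of_le].
  intro H; eapply le_trans; [| apply H, denC_wf].
  rewrite denD_arr; apply cond_ge, satC_denC, Hk.
Qed.

Definition supdenD (F : tyD K -> Prop) n (c : CR n) : T :=
  sup (fun y => exists d, F d /\ y = denD n d c).

Lemma supdenD_limit F :
  forall n, Dwf le n (supdenD F n) /\
    forall c, Cw n c -> supdenD F n c = supdenD F (S n) (e n c).
Proof.
  intro n; split.
  - replace (supdenD F n)
      with (fun c => sup (fun y => exists f, (exists d, F d /\ f = denD n d) /\ y = f c)).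
    + apply sup_cont; intros f [d [_ ->]]; apply denD_cont.
    + apply functional_extensionality; intro c; apply sup_ext; intro y; split.
      * intros [f [[d [Fd ->]] ->]]; eauto.
      * intros [d [Fd ->]]; eauto.
  - intros c Hc; apply sup_ext; intro y.
    split; intros [d [Fd ->]]; exists d; rewrite denD_emb; auto.
Qed.

Lemma satDlim_supdenD F : is_filter (leD le) omD meetD F ->
  forall d, satDlim (exist _ (supdenD F) (supdenD_limit F)) d <-> F d.
Proof.
  intros HF; pose proof HF as [Fom [Fup Fmeet]].
  set (x := exist _ (supdenD F) (supdenD_limit F)).
  assert (Harr : forall k r, satDlim x (arrD k r) -> F (arrD k r)).
  { intros k r H; apply (satDlim_arr x (depthC k)) in H; [| lia]; cbn in H.
    assert (Hdir : directed le (fun y => exists d, F d /\ y = denD (depthC k) d (denC _ k))).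
    { split; [exists bot, omD; auto |].
      intros y1 y2 [d1 [F1 ->]] [d2 [F2 ->]].
      exists (denD (depthC k) (meetD d1 d2) (denC (depthC k) k)).
      split; [eauto | rewrite denD_meet; split; [apply join_l | apply join_r]]. }
    destruct (compact_le_sup _ _ (denR_compact r) Hdir H) as [y [[d [Fd ->]] Hle]].
    eapply Fup; [exact Fd | apply (leD_arr_complete (depthC k)), Hle]. }
  intro d; split.
  - induction d as [r | k r | | a IHa b IHb]; intro H.
    + eapply Fup; [apply Harr | apply leD_rD_arr].
      eapply (satDlim_filter x); [exact H | apply leD_rD_arr].
    + apply Harr, H.
    + exact Fom.
    + apply Fmeet; [apply IHa | apply IHb]; eapply (satDlim_filter x);
        eauto using leD_meet_l, leD_meet_r.
  - intros Fd n c _; apply sup_ub; eauto.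
Qed.

Lemma D_filter_iso :
  order_iso (@filter_incl _ _ : filterD le -> filterD le -> Prop) (@Dlim_le T le bot).
Proof.
  apply (filter_order_iso _ _ _ _ satDlim); [apply satDlim_filter | | ].
  - intros x y; split.
    + intros Hxy d Hd n c Hc; eapply le_trans; [apply Hd, Hc | apply Hxy, Hc].
    + intros H n c Hc; apply le_compact_approx; intros a [Ha Hac].
      destruct x as [x Hx]; cbn in Hac.
      destruct (compact_le_cont_approx n (x n) c a (proj1 (Hx n)) (approxC_lub n c Hc) Ha Hac)
        as [k [Dk [Hk Hak]]].
      set (ka := exist _ a Ha : K).
      assert (Hsat : satDlim y (arrD k (psiR ka))).
      { apply H, (satDlim_arr_of_le (exist _ x Hx) n k (psiR ka)), Hak. }
      apply (satDlim_arr y n k (psiR ka) Dk) in Hsat; cbn in Hsat.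
      eapply le_trans; [exact Hsat |].
      apply (cont_mono _ _ _ _ _ (proj1 (proj2_sig y n))); auto using denC_wf.
  - intros F HF; exists (exist _ (supdenD F) (supdenD_limit F)); apply satDlim_supdenD, HF.
Qed.

Definition satClim (x : Clim le bot) (k : tyC K) : Prop :=
  forall n, Cl n (denC n k) (proj1_sig x n).

Lemma satClim_filter x : is_filter (leC le) omC meetC (satClim x).
Proof.
  split; [| split].
  - intro n; apply denC_om_least.
  - intros k1 k2 H Hk n; eapply Cle_trans; [apply (proj2 le_sound k1 k2 Hk n) | apply H].
  - intros k1 k2 H1 H2 n; apply denC_meet_least; auto.
Qed.

Lemma satClim_of_le (x : Clim le bot) n k :
  depthC k <= n -> Cl n (denC n k) (proj1_sig x n) -> satClim x k.
Proof.
  destruct x as [x Hx]; cbn; intros Dk Hn; unfold satClim; cbn.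
  apply (nat_ind_down (fun m => Cl m (denC m k) (x m)) n).
  - intros m Hm; induction Hm as [| m Hm IH]; [exact Hn |].
    destruct (Hx m) as [Wm [Hprj _]], (Hx (S m)) as [WSm _].
    apply Cle_trans with (e m (denC m k)); [apply denC_S_le_emb; lia |].
    apply Cle_trans with (e m (x m)); [apply emb_mono; auto using denC_wf |].
    apply Cle_trans with (e m (p m (x (S m)))); [apply emb_mono; auto using prj_wf |].
    apply emb_prj_le, WSm.
  - intros m HS; destruct (Hx m) as [Wm [_ Hprj]], (Hx (S m)) as [WSm _].
    eapply Cle_trans; [apply prj_denC |].
    apply Cle_trans with (p m (x (S m))); [apply prj_mono; auto using denC_wf | exact Hprj].
Qed.

Definition supdenC (F : tyC K -> Prop) n : CR n :=
  supC n (fun s => exists k, F k /\ s = denC n k).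

Lemma supdenC_limit F : forall n,
  Cw n (supdenC F n) /\ Cl n (supdenC F n) (p n (supdenC F (S n))) /\
  Cl n (p n (supdenC F (S n))) (supdenC F n).
Proof.
  assert (Hwf : forall n s, (exists k, F k /\ s = denC n k) -> Cw n s)
    by (intros n s [k [_ ->]]; apply denC_wf).
  intro n; split; [| split].
  - apply supC_wf, Hwf.
  - apply supC_least; intros s [k [Fk ->]].
    eapply Cle_trans; [apply prj_denC |].
    apply prj_mono; [apply denC_wf | apply supC_wf, Hwf | apply supC_ub; eauto].
  - eapply Cle_trans; [apply prj_supC, Hwf |]; apply supC_mono.
    intros r [s [[k [Fk ->]] ->]]; exists (denC n k); split; [eauto | apply prj_denC].
Qed.

Lemma satClim_supdenC F : is_filter (leC le) omC meetC F ->
  forall k, satClim (exist _ (supdenC F) (supdenC_limit F)) k <-> F k.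
Proof.
  intros [Fom [Fup Fmeet]] k; split; [| intros Fk n; apply supC_ub; eauto].
  intro H; set (n := depthC k); specialize (H n); cbn in H.
  assert (Hwf : forall s, (exists k, F k /\ s = denC n k) -> Cw n s)
    by (intros s [k' [_ ->]]; apply denC_wf).
  assert (Hsat : satC n (supdenC F n) k).
  { apply satC_mono with (denC n k); [apply denC_wf | apply supC_wf, Hwf | exact H |].
    apply satC_denC; reflexivity. }
  assert (Hdir : directed (Cl n) (fun s => exists k, F k /\ s = denC n k)).
  { split; [exists (denC n omC), omC; auto |].
    intros s1 s2 [k1 [F1 ->]] [k2 [F2 ->]]; exists (denC n (meetC k1 k2)).
    split; [eauto | split; [apply denC_meet_l | apply denC_meet_r]]. }
  destruct (satC_open n _ Hwf Hdir k Hsat) as [s [[k' [Fk' ->]] Hs]].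
  eapply Fup; [exact Fk' | apply (leC_complete n), Hs].
Qed.

Lemma C_filter_iso :
  order_iso (@filter_incl _ _ : filterC le -> filterC le -> Prop) (@Clim_le T le bot).
Proof.
  apply (filter_order_iso _ _ _ _ satClim); [apply satClim_filter | | ].
  - intros x y; split.
    + intros Hxy k Hk n; eapply Cle_trans; [apply Hk | apply Hxy].
    + intros H n; pose proof (proj1 (proj2_sig x n)) as Wx.
      apply (approxC_lub n _ Wx); [apply (proj2_sig y n) |].
      intros s [k [Dk [-> Hk]]]; apply H; eapply satClim_of_le; eauto.
  - intros F HF; exists (exist _ (supdenC F) (supdenC_limit F)); apply satClim_supdenC, HF.
Qed.

End FilterModel.

Theorem theorem3p21 (T : Type) (le : T -> T -> Prop) (bot : T)
  (HR : omega_algebraic_lattice le) (Hbot : forall x, le bot x) :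
  order_iso (@filter_incl _ _ : filterR le -> filterR le -> Prop) le /\
  order_iso (@filter_incl _ _ : filterD le -> filterD le -> Prop) (@Dlim_le T le bot) /\
  order_iso (@filter_incl _ _ : filterC le -> filterC le -> Prop) (@Clim_le T le bot).
Proof.
  split; [exact (R_filter_iso T le bot HR Hbot) |].
  split; [exact (D_filter_iso T le bot HR Hbot) | exact (C_filter_iso T le bot HR Hbot)].
Qed.
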